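(* A mechanism $\varphi$ is strategyproof if and only if it is separation monotonic, separation upper invariant, and separation lower invariant.
   Context: Let $M$ be a finite set of $m$ alternatives. A preference order is a weak order $R$ on $M$ (with strict part $P$ and indifference $I$), represented as $M_1 ~P~ \ldots ~P~ M_K$, where $(M_k)_{1\le k\le K}$ is a partition of $M$ such that the agent is indifferent between any two alternatives in the same $M_k$ and strictly prefers every alternative of $M_k$ to every alternative of $M_{k+1}$. Let $\mathcal{R}$ be the set of all preference orders. A mechanism is a map $\varphi:\mathcal{R}\to\Delta(M)$ (lotteries over $M$); for $A\subseteq M$ write $\varphi_A(R)=\sum_{a\in A}\varphi_a(R)$. A lottery $x$ first order-stochastically dominates $y$ at $R$ if $\sum_{j: j R a} x_j \ge \sum_{j: j R a} y_j$ for all $a\in M$. $\varphi$ is strategyproof if for all $(R,R')\in\mathcal{R}^2$, $\varphi(R)$ first order-stochastically dominates $\varphi(R')$ at $R$. A separation is a pair $(R,R')$ such that, for some $\kappa\in\{1,\ldots,K\}$, $R$ is $M_1 P \ldots P M_\kappa P \ldots P M_K$ and $R'$ is $M_1 P' \ldots P' M_{\kappa-1} P' M^1_\kappa P' M^2_\kappa P' M_{\kappa+1} P' \ldots P' M_K$, where $M^1_\kappa \dot\cup M^2_\kappa = M_\kappa$ is a disjoint partition. The axioms: $\varphi$ is separation responsive if for all separations $\varphi_{M^1_\kappa}(R')\ge\varphi_{M^1_\kappa}(R)$ and $\varphi_{M^2_\kappa}(R')\le\varphi_{M^2_\kappa}(R)$; separation direct if for all separations with $\varphi_{M_k}(R)\ne\varphi_{M_k}(R')$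 for some $k$, we have $\varphi_{M^1_\kappa}(R')\ne\varphi_{M^1_\kappa}(R)$ and $\varphi_{M^2_\kappa}(R')\ne\varphi_{M^2_\kappa}(R)$; separation monotonic if both separation responsive and separation direct; separation upper invariant if for all separations $\varphi_{M_k}(R)=\varphi_{M_k}(R')$ for all $k\in\{1,\ldots,\kappa-1\}$; separation lower invariant if for all separations $\varphi_{M_k}(R)=\varphi_{M_k}(R')$ for all $k\in\{\kappa+1,\ldots,K\}$. *)

From HB Require Import structures.
From mathcomp Require Import all_boot all_order all_algebra.
Set Implicit Arguments. Unset Strict Implicit. Unset Printing Implicit Defensive.
Import Order.TTheory GRing.Theory Num.Theory.
Local Open Scope ring_scope.

Section Defs.
Variables (R : realFieldType) (M : finType).

(* A preference order (weak order) on M, represented as in the paper by its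
   ordered partition M_1 P M_2 P ... P M_K into indifference classes:
   the list [:: M_1; ...; M_K] of nonempty, pairwise disjoint sets covering M.
   (Indices in the list are 0-based.) *)
Definition is_pref (s : seq {set M}) : Prop :=
  [/\ all (fun B => B != set0) s,
      pairwise (fun A B : {set M} => [disjoint A & B]) s &
      \bigcup_(B <- s) B = [set: M]].

Definition rank (s : seq {set M}) (a : M) : nat := find (fun B : {set M} => a \in B) s.

Definition wpref (s : seq {set M}) (a b : M) : bool := (rank s a <= rank s b)%N.

Definition is_lottery (x : {ffun M -> R}) : Prop :=
  (forall a, 0 <= x a) /\ \sum_a x a = 1.

Definition massA (x : {ffun M -> R}) (A : {set M}) : R := \sum_(a in A) x a.

Definition fosd (s : seq {set M}) (x y : {ffun M -> R}) : Prop :=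
  forall a : M, \sum_(j | wpref s j a) y j <= \sum_(j | wpref s j a) x j.

Definition mechanism := seq {set M} -> {ffun M -> R}.

Definition strategyproof (phi : mechanism) : Prop :=
  forall s s', is_pref s -> is_pref s' -> fosd s (phi s) (phi s').

Definition separation (s s' : seq {set M}) (kappa : nat) (M1 M2 : {set M}) : Prop :=
  [/\ is_pref s, (kappa < size s)%N,
      [/\ M1 != set0, M2 != set0 & [disjoint M1 & M2]],
      M1 :|: M2 = nth set0 s kappa &
      s' = take kappa s ++ M1 :: M2 :: drop kappa.+1 s].

Definition separation_responsive (phi : mechanism) : Prop :=
  forall s s' kappa M1 M2, separation s s' kappa M1 M2 ->
    massA (phi s) M1 <= massA (phi s') M1 /\ massA (phi s') M2 <= massA (phi s) M2.

Definition separation_direct (phi : mechanism) : Prop :=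
  forall s s' kappa M1 M2, separation s s' kappa M1 M2 ->
    (exists2 k, (k < size s)%N &
        massA (phi s) (nth set0 s k) != massA (phi s') (nth set0 s k)) ->
    massA (phi s') M1 != massA (phi s) M1 /\ massA (phi s') M2 != massA (phi s) M2.

Definition separation_monotonic (phi : mechanism) : Prop :=
  separation_responsive phi /\ separation_direct phi.

Definition separation_upper_invariant (phi : mechanism) : Prop :=
  forall s s' kappa M1 M2, separation s s' kappa M1 M2 ->
    forall k, (k < kappa)%N ->
      massA (phi s) (nth set0 s k) = massA (phi s') (nth set0 s k).

Definition separation_lower_invariant (phi : mechanism) : Prop :=
  forall s s' kappa M1 M2, separation s s' kappa M1 M2 ->
    forall k, (kappa < k < size s)%N ->
      massA (phi s) (nth set0 s k) = massA (phi s') (nth set0 s k).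

End Defs.

From mathcomp Require Import all_boot all_order all_algebra.
From mathcomp Require Import lra zify.
Set Implicit Arguments. Unset Strict Implicit. Unset Printing Implicit Defensive.
Import Order.TTheory GRing.Theory Num.Theory.

(* A lottery dominates another at a preference iff it gives at least as much
   probability to every upper contour set, i.e. to every union of the i best
   classes.

   Necessity: if (s, s') is a separation, every upper contour set of s is one
   of s', so strategyproofness at s and at s' makes phi s and phi s' agree on
   all of them, hence on every class of s.  Responsiveness follows since M1
   together with the classes above it is an upper contour set of s', and
   directness holds vacuously.

   Sufficiency: upper and lower invariance, together with total mass 1, make a
   separation preserve the probability of every class of the coarser
   preference, hence of every union of its classes, and so does any
   refinement.  Let U be an upper contour set of s; then phi s gives U the same
   probability as the report [U; ~U].  Starting from s', split every class
   meeting both U and its complement with the part inside U on top, then move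
   the classes inside U above adjacent classes outside U, each move being a
   merge followed by a split.  By responsiveness no step decreases the
   probability of U, and the final report refines [U; ~U]. *)

Lemma pairwise_perm (T : eqType) (r : rel T) (s t : seq T) :
  symmetric r -> perm_eq s t -> pairwise r s -> pairwise r t.
Proof.
move=> r_sym; elim: t s => // y t IH s st.
have ys : y \in s by rewrite (perm_mem st) mem_head.
case/splitPr: ys st => s1 s2 st.
rewrite -[y :: s2]cat1s perm_catCA perm_cons in st.
rewrite pairwise_cat allrel_consr pairwise_cons.
case/and3P=> /andP[ys1 s12] ps1 /andP[ys2 ps2].
rewrite pairwise_cons -(perm_all _ st) (IH _ st) ?pairwise_cat ?s12 ?ps1 ?ps2 //.
by rewrite all_cat ys2 !andbT; apply/allP => x /(allP ys1); rewrite /= r_sym.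
Qed.

Section Preferences.
Variable M : finType.
Implicit Types (s t pre post : seq {set M}) (A B C D E U X : {set M}).

Definition saturated s X := all (fun D => (D \subset X) || [disjoint D & X]) s.

Lemma is_pref_perm s t : perm_eq s t -> is_pref s -> is_pref t.
Proof.
move=> st [ne pw cov]; split; first by rewrite -(perm_all _ st).
  by apply: pairwise_perm pw => // A B; apply: disjoint_sym.
by rewrite -(perm_big _ st).
Qed.

Lemma pref_disjoint s D E : is_pref s -> D \in s -> E \in s -> D != E -> [disjoint D & E].
Proof.
move=> s_pref Ds Es DE.
have [_ /andP[/allP DP _] _] := is_pref_perm (perm_to_rem Ds) s_pref.
by apply: DP; rewrite rem_mem // eq_sym.
Qed.

Lemma pref_saturated s E : is_pref s -> E \in s -> saturated s E.
Proof.
move=> s_pref Es; apply/allP => D Ds; case: (eqVneq D E) => [->|DE].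
  by rewrite subxx.
by rewrite (pref_disjoint s_pref) ?orbT.
Qed.

Lemma pref_cover s a : is_pref s -> exists2 D, D \in s & a \in D.
Proof.
case=> _ _ cov; have : a \in \bigcup_(B <- s) B by rewrite cov inE.
by rewrite bigcup_seq => /bigcupP[D Ds aD]; exists D.
Qed.

Lemma is_pref_split pre post (M1 M2 : {set M}) :
  M1 != set0 -> M2 != set0 -> [disjoint M1 & M2] ->
  is_pref (pre ++ (M1 :|: M2) :: post) <-> is_pref (pre ++ M1 :: M2 :: post).
Proof.
move=> M1n0 M2n0 M12.
have disjointUl A B X : [disjoint A :|: B & X] = [disjoint A & X] && [disjoint B & X].
  by rewrite -!setI_eq0 setIUl setU_eq0.
have disjointUr A B X : [disjoint X & A :|: B] = [disjoint X & A] && [disjoint X & B].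
  by rewrite -!setI_eq0 setIUr setU_eq0.
rewrite /is_pref !all_cat !pairwise_cat !pairwise_cons !allrel_consr !big_cat !big_cons.
rewrite (eq_all (disjointUr M1 M2)) (eq_all (disjointUl M1 M2)) !all_predI.
by rewrite /= setU_eq0 (negPf M1n0) M2n0 M12 !setUA -!andbA /=.
Qed.

Lemma is_pref_swap pre post A B :
  is_pref (pre ++ B :: A :: post) -> is_pref (pre ++ A :: B :: post).
Proof.
by apply: is_pref_perm; rewrite perm_cat2l; apply/permPl/(perm_catCA [:: B] [:: A]).
Qed.

Lemma pref_adjacent pre post A B :
  is_pref (pre ++ B :: A :: post) -> [/\ B != set0, A != set0 & [disjoint B & A]].
Proof.
case; rewrite all_cat pairwise_cat /= => /and4P[_ Bn0 An0 _].
by case/and5P=> _ _ /andP[BA _] _ _; split.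
Qed.

Lemma separation_split pre post (M1 M2 : {set M}) :
  is_pref (pre ++ (M1 :|: M2) :: post) ->
  M1 != set0 -> M2 != set0 -> [disjoint M1 & M2] ->
  separation (pre ++ (M1 :|: M2) :: post) (pre ++ M1 :: M2 :: post) (size pre) M1 M2.
Proof.
move=> s_pref M1n0 M2n0 M12; split => //.
- by rewrite size_cat /= -addSnnS leq_addr.
- by rewrite nth_cat ltnn subnn.
- by rewrite take_size_cat // drop_cat ltnNge leqnSn subSnn /= drop0.
Qed.

Lemma separationE s s' kappa (M1 M2 : {set M}) :
  separation s s' kappa M1 M2 ->
  exists pre post, [/\ s = pre ++ (M1 :|: M2) :: post,
                       s' = pre ++ M1 :: M2 :: post & kappa = size pre].
Proof.
case=> _ kappa_lt _ sk ->; exists (take kappa s), (drop kappa.+1 s); split => //.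
- by rewrite sk -drop_nth // cat_take_drop.
- by rewrite size_take kappa_lt.
Qed.

Lemma saturated_cat s t X : saturated (s ++ t) X = saturated s X && saturated t X.
Proof. exact: all_cat. Qed.

Lemma saturated_sub s X : all (fun D => D \subset X) s -> saturated s X.
Proof. by move=> sX; apply/allP => D /(allP sX) ->. Qed.

Lemma saturated_filter (p : pred {set M}) s X : saturated s X -> saturated (filter p s) X.
Proof. by move=> sat; apply/allP => D; rewrite mem_filter => /andP[_ /(allP sat)]. Qed.

Lemma saturated_split pre post (M1 M2 : {set M}) X :
  saturated (pre ++ (M1 :|: M2) :: post) X -> saturated (pre ++ M1 :: M2 :: post) X.
Proof.
rewrite !saturated_cat /saturated /= => /and3P[-> /orP[M12X|M12X] ->]; rewrite ?andbT.
  by rewrite (subset_trans (subsetUl _ _) M12X) (subset_trans (subsetUr _ _) M12X).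
by rewrite (disjointWl (subsetUl _ _) M12X) (disjointWl (subsetUr _ _) M12X) !orbT.
Qed.

Inductive refines : seq {set M} -> seq {set M} -> Prop :=
| refines_refl s : refines s s
| refines_split t pre post (M1 M2 : {set M}) :
    M1 != set0 -> M2 != set0 -> [disjoint M1 & M2] ->
    refines t (pre ++ M1 :: M2 :: post) -> refines t (pre ++ (M1 :|: M2) :: post).

Lemma refines_trans t s u : refines t s -> refines s u -> refines t u.
Proof.
move=> ts su; elim: su t ts => // {}s pre post M1 M2 M1n0 M2n0 M12 _ IH t ts.
exact: refines_split (IH t ts).
Qed.

Lemma refines_cat t1 s1 t2 s2 :
  refines t1 s1 -> refines t2 s2 -> refines (t1 ++ t2) (s1 ++ s2).
Proof.
have refines_in a b t s : refines t s -> refines (a ++ t ++ b) (a ++ s ++ b).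
  elim=> [s0|{}t pre post M1 M2 M1n0 M2n0 M12 _ IH]; first exact: refines_refl.
  by move: IH; rewrite -!catA /= !(catA a pre); apply: refines_split.
move=> /(refines_in [::] t2) ts1 /(refines_in s1 [::]); rewrite !cats0 => ts2.
exact: refines_trans ts1 ts2.
Qed.

Lemma refines_pref t s : refines t s -> is_pref t <-> is_pref s.
Proof.
elim=> // {}t pre post M1 M2 M1n0 M2n0 M12 _ IH.
exact: iff_trans IH (iff_sym (is_pref_split _ _ M1n0 M2n0 M12)).
Qed.

Lemma refines_bigcup s :
  s != [::] -> all (fun B => B != set0) s ->
  pairwise (fun A B : {set M} => [disjoint A & B]) s ->
  refines s [:: \bigcup_(D <- s) D].
Proof.
elim: s => // C s IH _; case: s IH => [|C' s] IH.
  by rewrite big_seq1 => _ _; apply: refines_refl.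
rewrite big_cons => /andP[Cn0 ne] /andP[/allP C_dis pw].
apply: (@refines_split _ [::] [::]) => //.
- by rewrite big_cons (subset_neq0 (subsetUl C' _)) //; case/andP: ne.
- by rewrite bigcup_seq; apply: bigcup_disjoint => D /C_dis.
- exact: (refines_cat (refines_refl [:: C]) (IH isT ne pw)).
Qed.

Lemma refines_halves l1 l2 :
  is_pref (l1 ++ l2) -> l1 != [::] -> l2 != [::] ->
  refines (l1 ++ l2) [:: \bigcup_(D <- l1) D; ~: \bigcup_(D <- l1) D].
Proof.
case; rewrite all_cat pairwise_cat big_cat => /andP[ne1 ne2] /and3P[cross pw1 pw2] cov.
move=> l1n0 l2n0.
suff -> : ~: (\bigcup_(D <- l1) D) = \bigcup_(D <- l2) D.
  exact: refines_cat (refines_bigcup l1n0 ne1 pw1) (refines_bigcup l2n0 ne2 pw2).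
have l1_l2 : [disjoint \bigcup_(D <- l1) D & \bigcup_(D <- l2) D].
  rewrite !bigcup_seq; apply: bigcup_disjoint => E E2; rewrite disjoint_sym.
  apply: bigcup_disjoint => D D1; rewrite disjoint_sym.
  by move/allrelP: cross; apply.
rewrite -[~: _]setIT -cov setIUr [~: _ :&: _]setIC setICr set0U; apply/setIidPr.
by rewrite -disjoints_subset disjoint_sym.
Qed.

Definition split_along U C :=
  if (C :&: U != set0) && (C :\: U != set0) then [:: C :&: U; C :\: U] else [:: C].

Definition refine_along U s := flatten (map (split_along U) s).

Lemma disjoint_setID C U : [disjoint C :&: U & C :\: U].
Proof.
by rewrite (disjointWl (subsetIr C U)) // disjoints_subset setDE setCI setCK subsetUr.
Qed.

Lemma refine_along_cat U s t :
  refine_along U (s ++ t) = refine_along U s ++ refine_along U t.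
Proof. by rewrite /refine_along map_cat flatten_cat. Qed.

Lemma refines_refine_along U s : refines (refine_along U s) s.
Proof.
elim: s => [|C s IH]; first exact: refines_refl.
apply: (refines_cat (s1 := [:: C])) IH; rewrite /split_along.
case: ifP => [/andP[CUn0 CDn0]|_]; last exact: refines_refl.
rewrite -{3}(setID C U); apply: (@refines_split _ [::] [::]) => //.
  exact: disjoint_setID.
exact: refines_refl.
Qed.

Lemma saturated_refine_along U s : saturated (refine_along U s) U.
Proof.
apply/allP => D /flatten_mapP[C _]; rewrite /split_along.
case: ifP => [_|/negbT]; rewrite !inE.
  by case/orP=> /eqP->; rewrite ?subsetIr // disjoints_subset setDE subsetIr orbT.
rewrite negb_and !negbK setI_eq0 setD_eq0 => CU /eqP->.
by rewrite orbC.
Qed.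

Lemma refine_along_split U pre post C :
  C :&: U != set0 -> C :\: U != set0 ->
  refine_along U (pre ++ C :&: U :: C :\: U :: post) = refine_along U (pre ++ C :: post).
Proof.
move=> CUn0 CDn0.
have CUD : (C :&: U) :\: U = set0 by rewrite setDE -setIA setICr setI0.
have CDU : (C :\: U) :&: U = set0 by rewrite setDE -setIA [~: U :&: U]setIC setICr setI0.
by rewrite !refine_along_cat /refine_along /= /split_along CUD CDU CUn0 CDn0 !eqxx !andbF.
Qed.

Definition raise U s :=
  filter (fun D => D \subset U) s ++ filter (predC (fun D => D \subset U)) s.

Lemma perm_raise U s : perm_eq (raise U s) s.
Proof. exact/permPl/perm_filterC. Qed.

Lemma bigcup_raise U s :
  is_pref s -> saturated s U -> \bigcup_(D <- filter (fun D => D \subset U) s) D = U.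
Proof.
move=> s_pref sat; apply/setP => a; rewrite bigcup_seq; apply/bigcupP/idP => [[D]|aU].
  by rewrite mem_filter => /andP[DU _] /(subsetP DU).
have [D Ds aD] := pref_cover a s_pref; exists D => //; rewrite mem_filter Ds andbT.
by case/orP: (allP sat D Ds) => // /disjointFr/(_ aD); rewrite aU.
Qed.

Lemma refines_raise U s :
  is_pref s -> saturated s U -> U != set0 -> ~: U != set0 ->
  refines (raise U s) [:: U; ~: U].
Proof.
move=> s_pref sat Un0 CUn0.
have raise_pref : is_pref (raise U s).
  by apply: is_pref_perm s_pref; rewrite perm_sym perm_raise.
have := refines_halves raise_pref; rewrite bigcup_raise //; apply.
  by apply: contraNneq Un0 => s0; rewrite -(bigcup_raise s_pref sat) s0 big_nil.
apply: contraNneq CUn0 => s0; case: raise_pref => _ _.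
by rewrite /raise s0 cats0 bigcup_raise // => ->; rewrite setCT.
Qed.

Definition upper s i := \bigcup_(C <- take i s) C.

Lemma rank_lt_size s a : is_pref s -> (rank s a < size s)%N.
Proof.
by move=> /(pref_cover a)[D Ds aD]; rewrite -has_find; apply/hasP; exists D.
Qed.

Lemma rank_nth s i a :
  is_pref s -> (i < size s)%N -> a \in nth set0 s i -> rank s a = i.
Proof.
move=> s_pref i_lt ai; have [_ pw _] := s_pref.
case: (ltngtP (rank s a) i) => // [lt|gt]; last by have := before_find set0 gt; rewrite ai.
have := (pairwiseP set0 pw) _ _ (rank_lt_size a s_pref) i_lt lt.
rewrite -setI_eq0 => /eqP/setP/(_ a); rewrite !inE ai andbT.
suff -> : a \in nth set0 s (rank s a) by [].
by apply: (nth_find set0 (a := fun B : {set M} => a \in B)); rewrite has_find rank_lt_size.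
Qed.

Lemma wpref_upper s a : is_pref s -> [set j | wpref s j a] = upper s (rank s a).+1.
Proof.
move=> s_pref; apply/setP => j; rewrite inE /wpref /rank -ltnS -has_take; last first.
  by rewrite has_find rank_lt_size.
by rewrite /upper bigcup_seq; apply/hasP/bigcupP => -[D Dt jD]; exists D.
Qed.

Lemma upperS s k : (k < size s)%N -> upper s k.+1 = upper s k :|: nth set0 s k.
Proof. by move=> k_lt; rewrite /upper (take_nth set0 k_lt) -cats1 big_cat big_seq1. Qed.

Lemma upper_disjoint_nth s k :
  is_pref s -> (k < size s)%N -> [disjoint upper s k & nth set0 s k].
Proof.
case=> _ pw _ k_lt; move: pw; rewrite -{1}(cat_take_drop k s) pairwise_cat.
rewrite (drop_nth set0 k_lt) => /and3P[/allrelP take_dis _ _].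
rewrite /upper bigcup_seq disjoint_sym; apply: bigcup_disjoint => D Dt.
by rewrite disjoint_sym take_dis ?mem_head.
Qed.

Lemma upper_split pre post (M1 M2 : {set M}) i :
  (i <= size (pre ++ (M1 :|: M2) :: post))%N ->
  exists2 j, (j <= size (pre ++ M1 :: M2 :: post))%N &
    upper (pre ++ (M1 :|: M2) :: post) i = upper (pre ++ M1 :: M2 :: post) j.
Proof.
rewrite !size_cat /= => i_le; case: (leqP i (size pre)) => [i_pre|pre_i].
  exists i; first by rewrite (leq_trans i_pre) ?leq_addr.
  rewrite /upper !take_cat; case: ltnP => // pre_le.
  have -> : i = size pre by lia.
  by rewrite subnn !take0.
have [k ik] : exists k, i = size pre + k.+1 by exists (i - (size pre).+1); lia.
subst i; exists (size pre + k.+2); first lia.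
rewrite /upper !takeD !take_size_cat // !drop_size_cat //= !big_cat !big_cons /=.
by rewrite -setUA.
Qed.

Lemma upper_split_M1 pre post (M1 M2 : {set M}) :
  upper (pre ++ M1 :: M2 :: post) (size pre).+1 =
  upper (pre ++ (M1 :|: M2) :: post) (size pre) :|: M1.
Proof.
by rewrite /upper -addn1 takeD !take_size_cat // drop_size_cat // big_cat big_seq1.
Qed.

End Preferences.

Local Open Scope ring_scope.

Section Mass.
Variables (R : realFieldType) (M : finType).
Implicit Types (x y z : {ffun M -> R}) (s : seq {set M}) (A B X : {set M}).

Lemma massA0 x : massA x set0 = 0.
Proof. by rewrite /massA big_set0. Qed.

Lemma massAU x A B : [disjoint A & B] -> massA x (A :|: B) = massA x A + massA x B.
Proof. by move=> AB; rewrite /massA -bigU //; apply: eq_bigl => a; rewrite !inE. Qed.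

Lemma massA_classes x s X : is_pref s -> massA x X = \sum_(D <- s) massA x (X :&: D).
Proof.
case=> _ pw cov; rewrite -{1}(setIT X) -cov.
elim: s pw {cov} => [_|D s IH /andP[/allP D_dis pw]].
  by rewrite !big_nil setI0 massA0.
rewrite !big_cons setIUr massAU ?IH //; apply: disjointW (subsetIr X D) (subsetIr X _) _.
by rewrite bigcup_seq; apply: bigcup_disjoint => E /D_dis.
Qed.

Lemma lottery_massT x : is_lottery x -> massA x setT = 1.
Proof. by case=> _ <-; apply: eq_bigl => a; rewrite inE. Qed.

Lemma lottery_mass_classes x s : is_lottery x -> is_pref s -> \sum_(D <- s) massA x D = 1.
Proof.
move=> x_lot s_pref; rewrite -(lottery_massT x_lot) (massA_classes x setT s_pref).
by apply: eq_bigr => D _; rewrite setTI.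
Qed.

Lemma massA_upperS x s k :
  is_pref s -> (k < size s)%N ->
  massA x (upper s k.+1) = massA x (upper s k) + massA x (nth set0 s k).
Proof. by move=> s_pref k_lt; rewrite upperS // massAU // upper_disjoint_nth. Qed.

Lemma fosdP s x y :
  is_pref s ->
  fosd s x y <-> forall i, (i <= size s)%N -> massA y (upper s i) <= massA x (upper s i).
Proof.
move=> s_pref.
have sum_wpref z a : \sum_(j | wpref s j a) z j = massA z (upper s (rank s a).+1).
  by rewrite -wpref_upper //; apply: eq_bigl => j; rewrite inE.
split=> [xy [|k] k_lt|xy a]; first by rewrite /upper take0 big_nil !massA0.
  have /set0Pn[a ak] : nth set0 s k != set0.
    by case: s_pref => /allP s_ne _ _; rewrite s_ne ?mem_nth.
  by have := xy a; rewrite !sum_wpref (rank_nth s_pref k_lt ak).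
by rewrite !sum_wpref; apply: xy; rewrite rank_lt_size.
Qed.

End Mass.

Section Sufficiency.
Variables (R : realFieldType) (M : finType) (phi : mechanism R M).
Hypotheses (phi_lottery : forall s, is_pref s -> is_lottery (phi s))
  (phi_responsive : separation_responsive phi)
  (phi_upper : separation_upper_invariant phi)
  (phi_lower : separation_lower_invariant phi).
Implicit Types (s t pre post : seq {set M}) (A B C D U X : {set M}).

Lemma separation_class_mass s s' kappa (M1 M2 : {set M}) D :
  separation s s' kappa M1 M2 -> D \in s -> massA (phi s) D = massA (phi s') D.
Proof.
move=> sep Ds; have [s_pref kappa_lt [M1n0 M2n0 M12] _ _] := sep.
have s'_pref : is_pref s'.
  have [pre [post [sE -> _]]] := separationE sep.
  by rewrite -(is_pref_split _ _ M1n0 M2n0 M12) -sE.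
pose m (z : {ffun M -> R}) k := massA z (nth set0 s k).
have other k : (k < size s)%N -> k != kappa -> m (phi s) k = m (phi s') k.
  move=> k_lt; case: ltngtP => // [k_kappa|kappa_k] _; first exact: phi_upper sep _ k_kappa.
  by apply: phi_lower sep _ _; rewrite kappa_k.
have total z : is_lottery z -> \sum_(k < size s) m z k = 1.
  by move=> z_lot; rewrite -(lottery_mass_classes z_lot s_pref) (big_nth set0) big_mkord.
rewrite -(nth_index set0 Ds); have := index_mem D s; rewrite Ds.
move: (index D s) => k k_lt; case: (eqVneq k kappa) => [->{k k_lt}|]; last exact: other.
have := total _ (phi_lottery s_pref); rewrite -(total _ (phi_lottery s'_pref)).
rewrite (bigD1 (Ordinal kappa_lt)) // [X in _ = X -> _](bigD1 (Ordinal kappa_lt)) //=.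
by rewrite (eq_bigr _ (fun k : 'I_(size s) => other k (ltn_ord k))); apply: addIr.
Qed.

Lemma separation_saturated_mass s s' kappa (M1 M2 : {set M}) X :
  separation s s' kappa M1 M2 -> saturated s X -> massA (phi s) X = massA (phi s') X.
Proof.
move=> sep sat; have [s_pref _ _ _ _] := sep.
rewrite !(massA_classes _ X s_pref); apply: eq_big_seq => D Ds.
case/orP: (allP sat D Ds) => DX; first by rewrite (setIidPr DX) (separation_class_mass sep).
by rewrite disjoint_sym in DX; rewrite (disjoint_setI0 DX) !massA0.
Qed.

Lemma refines_saturated_mass t s X :
  refines t s -> is_pref s -> saturated s X -> massA (phi t) X = massA (phi s) X.
Proof.
elim=> // {}t pre post M1 M2 M1n0 M2n0 M12 _ IH s_pref sat.
have sep := separation_split s_pref M1n0 M2n0 M12.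
rewrite (separation_saturated_mass sep sat) IH ?saturated_split //.
by rewrite -(is_pref_split _ _ M1n0 M2n0 M12).
Qed.

Lemma mass_refine_along U s :
  is_pref s -> massA (phi s) U <= massA (phi (refine_along U s)) U.
Proof.
move=> s_pref; rewrite !(massA_classes _ U s_pref) !big_seq; apply: ler_sum => C Cs.
rewrite setIC; have [/andP[CUn0 CDn0]|] := boolP ((C :&: U != set0) && (C :\: U != set0)).
  case/splitPr: Cs s_pref => pre post s_pref.
  have s0_pref : is_pref (pre ++ (C :&: U :|: C :\: U) :: post) by rewrite setID.
  have sep := separation_split s0_pref CUn0 CDn0 (disjoint_setID C U).
  have s1_pref : is_pref (pre ++ C :&: U :: C :\: U :: post).
    by rewrite -is_pref_split // disjoint_setID.
  have := (phi_responsive sep).1; rewrite setID => /le_trans; apply.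
  rewrite -refine_along_split // (refines_saturated_mass (refines_refine_along _ _)) //.
  by rewrite (pref_saturated s1_pref) // mem_cat mem_head orbT.
rewrite negb_and !negbK => /orP[/eqP->|]; first by rewrite !massA0.
rewrite setD_eq0 => /setIidPl->.
by rewrite (refines_saturated_mass (refines_refine_along U s)) // pref_saturated.
Qed.

Lemma mass_swap U pre post A B :
  is_pref (pre ++ B :: A :: post) -> A \subset U -> [disjoint B & U] ->
  saturated (pre ++ post) U ->
  massA (phi (pre ++ B :: A :: post)) U <= massA (phi (pre ++ A :: B :: post)) U.
Proof.
move=> BA_pref AU BU sat; have [Bn0 An0 BA] := pref_adjacent BA_pref.
have BA_merged : is_pref (pre ++ (B :|: A) :: post) by rewrite is_pref_split.
have AB_merged : is_pref (pre ++ (A :|: B) :: post) by rewrite setUC.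
have sepBA := separation_split BA_merged Bn0 An0 BA.
have AB : [disjoint A & B] by rewrite disjoint_sym.
have sepAB := separation_split AB_merged An0 Bn0 AB.
have same D : D \in pre ++ post ->
    massA (phi (pre ++ B :: A :: post)) (U :&: D) =
    massA (phi (pre ++ A :: B :: post)) (U :&: D).
  move=> D_pp; case/orP: (allP sat D D_pp) => DU; last first.
    by rewrite setIC (disjoint_setI0 DU) !massA0.
  have in_merged E : D \in pre ++ E :: post.
    by move: D_pp; rewrite !mem_cat inE => /orP[]->; rewrite ?orbT.
  rewrite (setIidPr DU) -(separation_class_mass sepBA (in_merged _)) setUC.
  exact: separation_class_mass sepAB (in_merged _).
rewrite !(massA_classes _ U BA_pref) !big_seq; apply: ler_sum => D.
rewrite mem_cat !inE => /or4P[D_pre|/eqP->|/eqP->|D_post].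
- by rewrite same // mem_cat D_pre.
- by rewrite setIC (disjoint_setI0 BU) !massA0.
- rewrite (setIidPr AU); have := (phi_responsive sepAB).1; rewrite setUC.
  exact: le_trans (phi_responsive sepBA).2.
- by rewrite same // mem_cat D_post orbT.
Qed.

Lemma mass_bubble U pre Us C rest :
  is_pref (pre ++ C :: Us ++ rest) -> all (fun D => D \subset U) Us ->
  [disjoint C & U] -> saturated (pre ++ rest) U ->
  massA (phi (pre ++ C :: Us ++ rest)) U <= massA (phi (pre ++ Us ++ C :: rest)) U.
Proof.
elim: Us pre => // A Us IH pre s_pref /andP[AU UsU] CU sat.
apply: le_trans (mass_swap s_pref AU CU _) _.
  move: sat; rewrite !saturated_cat => /andP[-> ->].
  by rewrite saturated_sub.
have := IH (pre ++ [:: A]); rewrite -!catA; apply => //.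
  exact: is_pref_swap.
by move: sat; rewrite !saturated_cat /saturated /= AU.
Qed.

Lemma mass_raise U pre s :
  is_pref (pre ++ s) -> saturated (pre ++ s) U ->
  massA (phi (pre ++ s)) U <= massA (phi (pre ++ raise U s)) U.
Proof.
elim: s pre => [|C s IH] pre s_pref sat; first by [].
have := IH (pre ++ [:: C]); rewrite -!catA => /(_ s_pref sat) /le_trans; apply.
rewrite /raise /=; case: ifP => CU //=.
have CU' : [disjoint C & U].
  by move: sat; rewrite saturated_cat /saturated /= CU => /and3P[].
apply: mass_bubble => //.
- apply: is_pref_perm s_pref; rewrite perm_cat2l perm_cons perm_sym; exact: perm_raise.
- exact: filter_all.
- move: sat; rewrite !saturated_cat => /andP[-> /= /andP[_ sat]].
  exact: saturated_filter.
Qed.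

Lemma mass_upper_le s s' i :
  is_pref s -> is_pref s' -> (0 < i < size s)%N ->
  massA (phi s') (upper s i) <= massA (phi s) (upper s i).
Proof.
move=> s_pref s'_pref /andP[i_gt0 i_lt]; set U := upper s i.
have halves : refines s [:: U; ~: U].
  have := refines_halves (l1 := take i s) (l2 := drop i s).
  rewrite cat_take_drop; apply => //.
    by rewrite -size_eq0 size_take i_lt -lt0n.
  by rewrite -size_eq0 size_drop subn_eq0 -ltnNge.
have two_pref : is_pref [:: U; ~: U] by rewrite -(refines_pref halves).
have [/and3P[Un0 CUn0 _] _ _] := two_pref.
have Q_pref := iffRL (refines_pref (refines_refine_along U s')) s'_pref.
have Q_sat := saturated_refine_along U s'.
apply: le_trans (mass_refine_along U s'_pref) _.
apply: le_trans (mass_raise (pre := [::]) Q_pref Q_sat) _.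
have U_sat : saturated [:: U; ~: U] U by rewrite (pref_saturated two_pref) ?mem_head.
rewrite (refines_saturated_mass (refines_raise Q_pref Q_sat Un0 CUn0)) //.
by rewrite (refines_saturated_mass halves).
Qed.

Lemma separation_axioms_strategyproof : strategyproof phi.
Proof.
move=> s s' s_pref s'_pref; apply/fosdP => // -[|i] i_le.
  by rewrite /upper take0 big_nil !massA0.
case: (ltnP i.+1 (size s)) => [i_lt|i_ge]; first exact: mass_upper_le.
have -> : i.+1 = size s by apply/eqP; rewrite eqn_leq i_le.
rewrite /upper take_size; have [_ _ ->] := s_pref.
by rewrite !lottery_massT ?lexx //; apply: phi_lottery.
Qed.

End Sufficiency.

Section Necessity.
Variables (R : realFieldType) (M : finType) (phi : mechanism R M).
Hypothesis phi_sp : strategyproof phi.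

Lemma strategyproof_upper_mass s s' i :
  is_pref s -> is_pref s' -> (i <= size s)%N ->
  massA (phi s') (upper s i) <= massA (phi s) (upper s i).
Proof.
by move=> s_pref s'_pref; have := (fosdP _ _ s_pref).1 (phi_sp s_pref s'_pref); apply.
Qed.

Lemma strategyproof_separation_upper s s' kappa (M1 M2 : {set M}) i :
  separation s s' kappa M1 M2 -> (i <= size s)%N ->
  massA (phi s) (upper s i) = massA (phi s') (upper s i).
Proof.
move=> sep; have [s_pref _ [M1n0 M2n0 M12] _ _] := sep.
have [pre [post [sE s'E _]]] := separationE sep; subst s s' => i_le.
have s'_pref := iffLR (is_pref_split _ _ M1n0 M2n0 M12) s_pref.
apply/le_anti; rewrite strategyproof_upper_mass // andbT.
by have [j j_le ->] := upper_split i_le; apply: strategyproof_upper_mass.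
Qed.

Lemma strategyproof_class_mass s s' kappa (M1 M2 : {set M}) k :
  separation s s' kappa M1 M2 -> (k < size s)%N ->
  massA (phi s) (nth set0 s k) = massA (phi s') (nth set0 s k).
Proof.
move=> sep k_lt; have [s_pref _ _ _ _] := sep.
have := strategyproof_separation_upper sep k_lt.
by rewrite !massA_upperS // (strategyproof_separation_upper sep (ltnW k_lt)); apply: addrI.
Qed.

Lemma strategyproof_responsive : separation_responsive phi.
Proof.
move=> s s' kappa M1 M2 sep; have [s_pref kappa_lt [M1n0 M2n0 M12] kappaE _] := sep.
have class := strategyproof_class_mass sep kappa_lt; rewrite -kappaE !massAU // in class.
suff M1_le : massA (phi s) M1 <= massA (phi s') M1 by split => //; lra.
have [pre [post [sE s'E kE]]] := separationE sep; subst s s' kappa.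
have s'_pref := iffLR (is_pref_split _ _ M1n0 M2n0 M12) s_pref.
have M1_upper : ((size pre).+1 <= size (pre ++ M1 :: M2 :: post))%N.
  by rewrite size_cat /= addnS ltnS leq_addr.
have := strategyproof_upper_mass s'_pref s_pref M1_upper.
have upper_M1 : [disjoint upper (pre ++ (M1 :|: M2) :: post) (size pre) & M1].
  have := upper_disjoint_nth s_pref kappa_lt; rewrite -kappaE.
  exact: disjointWr (subsetUl M1 M2).
by rewrite upper_split_M1 !massAU // (strategyproof_separation_upper sep) ?lerD2l // ltnW.
Qed.

Lemma strategyproof_direct : separation_direct phi.
Proof.
by move=> s s' kappa M1 M2 sep [k k_lt]; rewrite (strategyproof_class_mass sep k_lt) eqxx.
Qed.

Lemma strategyproof_upper_invariant : separation_upper_invariant phi.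
Proof.
move=> s s' kappa M1 M2 sep k k_kappa; have [_ kappa_lt _ _ _] := sep.
exact: strategyproof_class_mass sep (ltn_trans k_kappa kappa_lt).
Qed.

Lemma strategyproof_lower_invariant : separation_lower_invariant phi.
Proof.
by move=> s s' kappa M1 M2 sep k /andP[_ k_lt]; apply: strategyproof_class_mass sep k_lt.
Qed.

End Necessity.

Unset Implicit Arguments.

Theorem theorem1 (R : realFieldType) (M : finType) (phi : mechanism R M)
  (hlot : forall s, is_pref s -> is_lottery (phi s)) :
  strategyproof phi <->
  [/\ separation_monotonic phi, separation_upper_invariant phi
    & separation_lower_invariant phi].
Proof.
split=> [sp|[[responsive _] upper lower]].
  split; first split.
  - exact: strategyproof_responsive sp.
  - exact: strategyproof_direct sp.
  - exact: strategyproof_upper_invariant sp.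
  - exact: strategyproof_lower_invariant sp.
exact: separation_axioms_strategyproof hlot responsive upper lower.
Qed.
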